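(* Let $\mathrm{Jac}_{\bf f}(x)$ denote the $n\times m$ Jacobian matrix of ${\bf f}$ at $x$ (entry $(i,j)$ is $\partial f_j/\partial x_i$). Then $$\mathcal{R}^{lin}_{\bf f}=\bigcup_{x\in V_{\bf f}}\Big(\tfrac12\,\mathrm{Jac}_{\bf f}(x)\cdot \mathrm{S}^{lin}_{\bf f}\Big)\qquad\text{and}\qquad \mathcal{R}^{ed}_{\bf f}=\bigcup_{x\in V_{\bf f}}\Big(x-\tfrac12\,\mathrm{Jac}_{\bf f}(x)\cdot\mathrm{S}^{ed}_{\bf f}\Big),$$ and both unions are disjoint.
   Context: Let ${\bf f}=(f_1,\dots,f_m)$ with $f_i(x)=x^TA_ix+2a_i^Tx+\alpha_i$, $A_i$ real symmetric $n\times n$, $a_i\in\mathbb{R}^n$, $\alpha_i\in\mathbb{R}$, and $V_{\bf f}=\{x\in\mathbb{R}^n: f_1(x)=\dots=f_m(x)=0\}$. For $(C,c)\in\mathcal{S}^n\times\mathbb{R}^n$, write $H(\lambda)=C-\sum_i\lambda_iA_i$; the SDP-exact region $\mathcal{R}_{\bf f}$ is the set of $(C,c)$ (identified with $\begin{bmatrix}0&c^T\\c&C\end{bmatrix}$) for which there are $x\in V_{\bf f}$, $\lambda\in\mathbb{R}^m$ with $H(\lambda)\succ0$ and $c-\sum_i\lambda_ia_i+H(\lambda)x=0$. Define $\mathcal{R}^{lin}_{\bf f}=\{u\in\mathbb{R}^n:(C,c)=(0,u)\in\mathcal{R}_{\bf f}\}$ (SDP-exact region for minimizing $u^Tx$ on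 $V_{\bf f}$) and $\mathcal{R}^{ed}_{\bf f}=\{u\in\mathbb{R}^n:(C,c)=(I_n,-u)\in\mathcal{R}_{\bf f}\}$ (SDP-exact region for minimizing $\|x-u\|^2$ on $V_{\bf f}$). The master spectrahedra are $\mathrm{S}^{lin}_{\bf f}=\{\lambda\in\mathbb{R}^m:\sum_i\lambda_iA_i\prec0\}$ and $\mathrm{S}^{ed}_{\bf f}=\{\lambda\in\mathbb{R}^m:\sum_i\lambda_iA_i\prec I_n\}$. *)

From HB Require Import structures.
From mathcomp Require Import all_boot all_order all_algebra.
From mathcomp Require Import reals.
Set Implicit Arguments. Unset Strict Implicit. Unset Printing Implicit Defensive.
Import Order.TTheory GRing.Theory Num.Theory.
Local Open Scope ring_scope.

Section QCQP.
Variables (R : realType) (n m : nat).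
Variables (A : 'I_m -> 'M[R]_n) (a : 'I_m -> 'cV[R]_n) (alpha : 'I_m -> R).

Definition qf (i : 'I_m) (x : 'cV[R]_n) : R :=
  (x^T *m A i *m x) 0 0 + 2 * ((a i)^T *m x) 0 0 + alpha i.

Definition Vf (x : 'cV[R]_n) : Prop := forall i, qf i x = 0.

Definition posdef (M : 'M[R]_n) : Prop :=
  forall v : 'cV[R]_n, v != 0 -> 0 < (v^T *m M *m v) 0 0.

Definition sumA (l : 'cV[R]_m) : 'M[R]_n := \sum_(i < m) l i 0 *: A i.

Definition Hmat (C : 'M[R]_n) (l : 'cV[R]_m) : 'M[R]_n := C - sumA l.

Definition Rf (C : 'M[R]_n) (c : 'cV[R]_n) : Prop :=
  exists x : 'cV[R]_n, exists l : 'cV[R]_m,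
    Vf x /\ posdef (Hmat C l) /\
    c - (\sum_(i < m) l i 0 *: a i) + Hmat C l *m x = 0.

Definition Rlin (u : 'cV[R]_n) : Prop := Rf 0 u.
Definition Red (u : 'cV[R]_n) : Prop := Rf 1%:M (- u).

Definition Slin (l : 'cV[R]_m) : Prop := posdef (- sumA l).
Definition Sed (l : 'cV[R]_m) : Prop := posdef (1%:M - sumA l).

(* Jacobian: entry (i,j) = d f_j / d x_i = 2 (A_j x + a_j)_i *)
Definition Jac (x : 'cV[R]_n) : 'M[R]_(n, m) :=
  \matrix_(i < n, j < m) (2 * (A j *m x + a j) i 0).

Definition lin_piece (x : 'cV[R]_n) (u : 'cV[R]_n) : Prop :=
  exists2 l : 'cV[R]_m, Slin l & u = 2^-1 *: (Jac x *m l).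
Definition ed_piece (x : 'cV[R]_n) (u : 'cV[R]_n) : Prop :=
  exists2 l : 'cV[R]_m, Sed l & u = x - 2^-1 *: (Jac x *m l).

End QCQP.

From HB Require Import structures.
From mathcomp Require Import all_boot all_order all_algebra.
From mathcomp Require Import reals.
From mathcomp Require Import ring.
Set Implicit Arguments. Unset Strict Implicit. Unset Printing Implicit Defensive.
Import Order.TTheory GRing.Theory Num.Theory.
Local Open Scope ring_scope.

(* Let x be in V_f and lambda a multiplier with H(lambda) > 0 and
   c - sum_i lambda_i a_i + H(lambda) x = 0.  On V_f the objective
   q(z) = z^T C z + 2 c^T z coincides with the Lagrangian q(z) - sum_i lambda_i f_i(z),
   a quadratic function with Hessian H(lambda) that is stationary at x.  Hence
   q(z) - q(x) = (z - x)^T H(lambda) (z - x) > 0 for every other z in V_f: x is the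
   unique minimiser of q on V_f, so the pieces of R_f indexed by x are disjoint.
   For C = 0 and C = I_n the stationarity equation is the description of the pieces,
   since (1/2) Jac(x) lambda = (sum_i lambda_i A_i) x + sum_i lambda_i a_i. *)

Lemma trmx11 (T : Type) (M : 'M[T]_1) : M^T = M.
Proof. by apply/matrixP => i j; rewrite !ord1 mxE. Qed.

Section QuadraticObjective.
Variables (R : comNzRingType) (n : nat).

Definition quad_obj (C : 'M[R]_n) (c z : 'cV[R]_n) : R :=
  (z^T *m C *m z) 0 0 + 2 * (c^T *m z) 0 0.

Lemma quad_obj_sub_stationary (H : 'M[R]_n) (w x z : 'cV[R]_n) :
  H^T = H -> H *m x + w = 0 ->
  quad_obj H w z - quad_obj H w x = ((z - x)^T *m H *m (z - x)) 0 0.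
Proof.
move=> Hsym /eqP; rewrite addrC addr_eq0 => /eqP ->.
have Hxz : z^T *m H *m x = x^T *m H *m z.
  by rewrite -[LHS]trmx11 !trmx_mul trmxK Hsym mulmxA.
rewrite /quad_obj !linearN /= trmx_mul Hsym !mulNmx !linearB /= !mulmxBl Hxz.
by rewrite !mxE; ring.
Qed.

Lemma kkt_eqE (H : 'M[R]_n) (c s x : 'cV[R]_n) :
  c - s + H *m x = 0 <-> c = s - H *m x.
Proof.
split=> [/eqP|->]; last by rewrite addrAC subrK subrr.
by rewrite -addrA addr_eq0 opprD opprK => /eqP.
Qed.

End QuadraticObjective.

Section SDPExactRegion.
Variables (R : realType) (n m : nat).
Variables (A : 'I_m -> 'M[R]_n) (a : 'I_m -> 'cV[R]_n) (alpha : 'I_m -> R).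
Hypothesis Asym : forall i, (A i)^T = A i.

Definition lagrangian (C : 'M[R]_n) (c : 'cV[R]_n) (l : 'cV[R]_m) (z : 'cV[R]_n) : R :=
  quad_obj C c z - \sum_i l i 0 * qf A a alpha i z.

Lemma lagrangian_Vf (C : 'M[R]_n) (c : 'cV[R]_n) (l : 'cV[R]_m) (z : 'cV[R]_n) :
  Vf A a alpha z -> lagrangian C c l z = quad_obj C c z.
Proof. by move=> Vz; rewrite /lagrangian big1 ?subr0 // => i _; rewrite Vz mulr0. Qed.

Lemma lagrangianE (C : 'M[R]_n) (c : 'cV[R]_n) (l : 'cV[R]_m) (z : 'cV[R]_n) :
  lagrangian C c l z =
  quad_obj (Hmat A C l) (c - \sum_i l i 0 *: a i) z - \sum_i l i 0 * alpha i.
Proof.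
have sumA_form : (z^T *m sumA A l *m z) 0 0 = \sum_i l i 0 * (z^T *m A i *m z) 0 0.
  rewrite /sumA mulmx_sumr mulmx_suml summxE.
  by apply: eq_bigr => i _; rewrite -scalemxAr -scalemxAl mxE.
have sum_a_form :
    ((\sum_i l i 0 *: a i)^T *m z) 0 0 = \sum_i l i 0 * ((a i)^T *m z) 0 0.
  rewrite linear_sum mulmx_suml summxE.
  by apply: eq_bigr => i _; rewrite linearZ -scalemxAl mxE.
rewrite /lagrangian /quad_obj /Hmat /qf mulmxBr mulmxBl linearB /= mulmxBl.
rewrite [(_ - _ : 'M[R]_1) 0 0]mxE [(_ - _ : 'M[R]_1) 0 0]mxE.
rewrite [(- _ : 'M[R]_1) 0 0]mxE [(- _ : 'M[R]_1) 0 0]mxE sumA_form sum_a_form.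
under eq_bigr do rewrite !mulrDr mulrCA.
by rewrite !big_split /= -mulr_sumr; ring.
Qed.

Lemma Hmat_sym (C : 'M[R]_n) (l : 'cV[R]_m) : C^T = C -> (Hmat A C l)^T = Hmat A C l.
Proof.
move=> Csym; rewrite /Hmat linearB /= Csym /sumA linear_sum /=.
by congr (_ - _); apply: eq_bigr => i _; rewrite linearZ /= Asym.
Qed.

Lemma kkt_quad_obj_gap (C : 'M[R]_n) (c : 'cV[R]_n) (l : 'cV[R]_m) (x z : 'cV[R]_n) :
  C^T = C -> Vf A a alpha x -> Vf A a alpha z ->
  c - (\sum_i l i 0 *: a i) + Hmat A C l *m x = 0 ->
  quad_obj C c z - quad_obj C c x = ((z - x)^T *m Hmat A C l *m (z - x)) 0 0.
Proof.
move=> Csym Vx Vz kkt.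
rewrite -(@lagrangian_Vf C c l z Vz) -(@lagrangian_Vf C c l x Vx) !lagrangianE.
rewrite opprB addrA subrK.
by apply: quad_obj_sub_stationary; [exact: Hmat_sym | rewrite addrC].
Qed.

Lemma kkt_strict_min (C : 'M[R]_n) (c : 'cV[R]_n) (l : 'cV[R]_m) (x z : 'cV[R]_n) :
  C^T = C -> Vf A a alpha x -> Vf A a alpha z -> posdef (Hmat A C l) ->
  c - (\sum_i l i 0 *: a i) + Hmat A C l *m x = 0 ->
  z != x -> quad_obj C c x < quad_obj C c z.
Proof.
move=> Csym Vx Vz Hpos kkt zx; rewrite -subr_gt0 (kkt_quad_obj_gap Csym Vx Vz kkt).
by apply: Hpos; rewrite subr_eq0.
Qed.

Definition kkt_piece (C : 'M[R]_n) (x c : 'cV[R]_n) : Prop :=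
  exists2 l : 'cV[R]_m, posdef (Hmat A C l) &
    c - (\sum_i l i 0 *: a i) + Hmat A C l *m x = 0.

Lemma Rf_bigcup (C : 'M[R]_n) (c : 'cV[R]_n) :
  Rf A a alpha C c <-> exists2 x, Vf A a alpha x & kkt_piece C x c.
Proof.
split=> [[x [l [Vx [Hpos kkt]]]] | [x Vx [l Hpos kkt]]]; last by exists x, l.
by exists x => //; exists l.
Qed.

Lemma kkt_piece_disjoint (C : 'M[R]_n) (c x y : 'cV[R]_n) :
  C^T = C -> Vf A a alpha x -> Vf A a alpha y ->
  kkt_piece C x c -> kkt_piece C y c -> x = y.
Proof.
move=> Csym Vx Vy [l Hl kkt_x] [mu Hmu kkt_y]; apply/eqP; apply: contraT => xy.
have lt_xy : quad_obj C c x < quad_obj C c y.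
  by apply: (kkt_strict_min Csym Vx Vy Hl kkt_x); rewrite eq_sym.
have lt_yx := kkt_strict_min Csym Vy Vx Hmu kkt_y xy.
by have := lt_trans lt_xy lt_yx; rewrite ltxx.
Qed.

Lemma Jac_mulmx (x : 'cV[R]_n) (l : 'cV[R]_m) :
  2^-1 *: (Jac A a x *m l) = sumA A l *m x + \sum_i l i 0 *: a i.
Proof.
rewrite /sumA mulmx_suml; under eq_bigr do rewrite -scalemxAl.
apply/matrixP => i j; rewrite !ord1 !mxE !summxE mulr_sumr -big_split /=.
apply: eq_bigr => k _; rewrite !mxE.
have nz2 : (2 : R) != 0 by rewrite pnatr_eq0.
by field.
Qed.

Lemma lin_pieceE (x u : 'cV[R]_n) : lin_piece A a x u <-> kkt_piece 0 x u.
Proof.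
have Hmat0 (l : 'cV[R]_m) : Hmat A 0 l = - sumA A l by rewrite /Hmat sub0r.
have kktE (l : 'cV[R]_m) :
    u - (\sum_i l i 0 *: a i) + - sumA A l *m x = 0 <-> u = 2^-1 *: (Jac A a x *m l).
  by rewrite kkt_eqE mulNmx opprK addrC Jac_mulmx.
split=> -[l Hpos kkt]; exists l; rewrite /Slin ?Hmat0 in Hpos kkt * => //; exact/kktE.
Qed.

Lemma ed_pieceE (x u : 'cV[R]_n) : ed_piece A a x u <-> kkt_piece 1%:M x (- u).
Proof.
have kktE (l : 'cV[R]_m) :
    - u - (\sum_i l i 0 *: a i) + Hmat A 1%:M l *m x = 0 <->
    u = x - 2^-1 *: (Jac A a x *m l).
  rewrite kkt_eqE /Hmat mulmxBl mul1mx Jac_mulmx -[X in - u = X]opprB -addrA -opprD.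
  by split=> [/oppr_inj | ->].
split=> -[l Hpos kkt]; exists l => //; exact/kktE.
Qed.

End SDPExactRegion.

Theorem theorem4p1 (R : realType) (n m : nat)
  (A : 'I_m -> 'M[R]_n) (a : 'I_m -> 'cV[R]_n) (alpha : 'I_m -> R)
  (Asym : forall i, (A i)^T = A i) :
  (* R^lin = union over x in V_f of (1/2) Jac(x) . S^lin, disjoint *)
  (forall u : 'cV[R]_n,
      Rlin A a alpha u <-> exists2 x, Vf A a alpha x & lin_piece A a x u) /\
  (forall x y u : 'cV[R]_n, Vf A a alpha x -> Vf A a alpha y ->
      lin_piece A a x u -> lin_piece A a y u -> x = y) /\
  (* R^ed = union over x in V_f of x - (1/2) Jac(x) . S^ed, disjoint *)
  (forall u : 'cV[R]_n,
      Red A a alpha u <-> exists2 x, Vf A a alpha x & ed_piece A a x u) /\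
  (forall x y u : 'cV[R]_n, Vf A a alpha x -> Vf A a alpha y ->
      ed_piece A a x u -> ed_piece A a y u -> x = y).
Proof.
split; [|split; [|split]].
- move=> u; rewrite /Rlin Rf_bigcup.
  by split=> -[x Vx /lin_pieceE Px]; exists x.
- move=> x y u Vx Vy /lin_pieceE Px /lin_pieceE Py.
  by apply: (kkt_piece_disjoint Asym _ Vx Vy Px Py); rewrite trmx0.
- move=> u; rewrite /Red Rf_bigcup.
  by split=> -[x Vx /ed_pieceE Px]; exists x.
- move=> x y u Vx Vy /ed_pieceE Px /ed_pieceE Py.
  by apply: (kkt_piece_disjoint Asym _ Vx Vy Px Py); rewrite trmx1.
Qed.
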